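(* Let $X$ be a finite set with $|X|\ge2$, let $X_r$ be a disjoint copy of $X$, and regard $\bar{\mathcal{B}}(X)=\bar{\mathcal{B}}(X,X_r)$. A collection $\mathcal{S}$ of directed partial splits of $X$ is compatible if and only if $\{T_S:S\in\mathcal{S}\}$ is a compatible system of splits of $\bar{\mathcal{B}}(X)$.
   Context: A directed partial split of $X$ is an ordered pair $(A,B)$ of non-empty disjoint subsets of $X$. Two directed partial splits $(A,B),(C,D)$ are compatible if one of: $A\subseteq C$ and $B\supseteq D$; $A\subseteq X\setminus C$ and $B\supseteq X\setminus D$; $A\supseteq C$ and $B\subseteq D$; $A\supseteq X\setminus C$ and $B\subseteq X\setminus D$. A set of directed partial splits is compatible if its elements are pairwise compatible. $\bar{\mathcal{B}}(X,X_r)=\{e_x+e_{y'}:x\in X,y'\in X_r\}\subseteq\mathbb{R}^{X\cup X_r}$. For $S=(A,B)$, $T_S$ is the split of $\bar{\mathcal{B}}(X)$ with split hyperplane $\sum_{i\in A}f(i)=\sum_{j\in B'}f(j)$, where $B'\subseteq X_r$ is the copy of $B$. A split of a point configuration $\mathcal{A}$ is given by an affine hyperplane in the affine hull of $\mathcal{A}$ meeting the relative interior of $\operatorname{conv}\mathcal{A}$ and not strictly separating the endpoints of any edge of $\mathcal{A}$; a set of splits is compatible if for any two of them the intersection of their hyperplanes does not meet the relative interior of $\operatorname{conv}\mathcal{A}$. *)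

From HB Require Import structures.
From mathcomp Require Import all_boot all_order all_algebra.
Set Implicit Arguments. Unset Strict Implicit. Unset Printing Implicit Defensive.
Import Order.TTheory GRing.Theory Num.Theory.
Local Open Scope ring_scope.

Definition dps (X : finType) (S : {set X} * {set X}) : Prop :=
  [/\ S.1 != set0, S.2 != set0 & [disjoint S.1 & S.2]].

Definition dps_compat (X : finType) (S T : {set X} * {set X}) : Prop :=
  let: (A, B) := S in let: (C, D) := T in
  [\/ (A \subset C) && (D \subset B),
      (A \subset ~: C) && (~: D \subset B),
      (C \subset A) && (B \subset D)
    | (~: C \subset A) && (B \subset ~: D)].

Definition dps_set_compatible (X : finType) (SS : {set {set X} * {set X}}) : Prop :=
  forall S T, S \in SS -> T \in SS -> dps_compat S T.

Section PointConfig.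
Variables (R : realFieldType) (I D : finType).

Definition dot (a v : D -> R) : R := \sum_(d : D) a d * v d.

Definition in_conv (pts : I -> D -> R) (v : D -> R) : Prop :=
  exists lam : I -> R, [/\ forall k, 0 <= lam k, \sum_k lam k = 1
                         & forall d, v d = \sum_k lam k * pts k d].

Definition in_aff (pts : I -> D -> R) (v : D -> R) : Prop :=
  exists lam : I -> R, \sum_k lam k = 1 /\ forall d, v d = \sum_k lam k * pts k d.

Definition in_relint (pts : I -> D -> R) (v : D -> R) : Prop :=
  in_conv pts v /\
  exists eps : R, 0 < eps /\
    forall u, in_aff pts u -> (forall d, `|u d - v d| < eps) -> in_conv pts u.

Definition is_edge (pts : I -> D -> R) (k l : I) : Prop :=
  (exists d, pts k d != pts l d) /\
  exists w : D -> R,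
    [/\ forall m, dot w (pts m) <= dot w (pts k),
        dot w (pts k) = dot w (pts l)
      & forall m, dot w (pts m) = dot w (pts k) ->
          exists t : R, [/\ 0 <= t, t <= 1 &
            forall d, pts m d = (1 - t) * pts k d + t * pts l d]].

(* The hyperplane {v | dot a v = c} gives a split of the configuration:
   its trace on the affine hull is a hyperplane of the affine hull
   (it does not contain all points), it meets the relative interior of
   conv(pts), and it does not strictly separate the endpoints of any edge. *)
Definition is_split (pts : I -> D -> R) (a : D -> R) (c : R) : Prop :=
  [/\ exists k, dot a (pts k) != c,
      exists v, in_relint pts v /\ dot a v = c
    & forall k l, is_edge pts k l -> ~ (dot a (pts k) < c /\ c < dot a (pts l))].

Definition same_split (pts : I -> D -> R) (a1 : D -> R) (c1 : R)
  (a2 : D -> R) (c2 : R) : Prop :=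
  forall v, in_aff pts v -> (dot a1 v = c1 <-> dot a2 v = c2).

Definition compatible_split_system (J : Type) (P : J -> Prop)
  (pts : I -> D -> R) (a : J -> D -> R) (c : J -> R) : Prop :=
  (forall j, P j -> is_split pts (a j) (c j)) /\
  (forall j k, P j -> P k -> ~ same_split pts (a j) (c j) (a k) (c k) ->
     forall v, in_relint pts v -> dot (a j) v = c j -> dot (a k) v = c k -> False).

End PointConfig.

(* Coordinates of R^{X ∪ X_r} are indexed by X + X (inl x = x, inr y = y');
   points e_x + e_{y'} are indexed by (x, y) : X * X. *)
Definition Bpts (R : realFieldType) (X : finType) : X * X -> (X + X)%type -> R :=
  fun p d => match d with
             | inl x => (x == p.1)%:R
             | inr y => (y == p.2)%:R
             end.

(* Normal vector of the split hyperplane of T_S, S = (A,B):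
   sum_{i in A} f(i) - sum_{j in B'} f(j) = 0 *)
Definition Tnormal (R : realFieldType) (X : finType) (S : {set X} * {set X})
  : (X + X)%type -> R :=
  fun d => match d with
           | inl i => (i \in S.1)%:R
           | inr j => - (j \in S.2)%:R
           end.

From HB Require Import structures.
From mathcomp Require Import all_boot all_order all_algebra.
From mathcomp Require Import ring lra.
Set Implicit Arguments. Unset Strict Implicit. Unset Printing Implicit Defensive.
Import Order.TTheory GRing.Theory Num.Theory.
Local Open Scope ring_scope.

(* The affine hull of B(X) is {v | sum_x v(x) = 1 = sum_y v(y')}, its convex
   hull adds v >= 0 and (for #|X| >= 2) its relative interior is the set of
   such v with all coordinates positive.  On this hull the hyperplane of T_S,
   S = (A,B), reads  v(A) = v(B').  Edges of conv B(X) join vertices sharing a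
   coordinate, so no edge crosses such a hyperplane and every T_S is a split.

   Forward direction: if S, T are compatible, S is nested in T or in the
   complement (~C,~D) of T = (C,D) (which defines the same split).  For a
   positive point on both hyperplanes, nesting A <= C, D <= B forces A = C and
   B = D, so the splits coincide.

   Backward direction: if the two splits agree, comparing them on the
   vertices shows S = T or S = (~C,~D), hence compatibility.  If S and T are
   incompatible, we record which membership patterns (x in A, x in C) and
   (y in B, y in D) occur; incompatibility says that for every pattern t,
   t occurs for (A,C) or its negation occurs for (B,D).  A finite check over
   the 2^8 pattern configurations provides positive integer weights on the
   occurring patterns with equal total and equal first and second marginals.
   Spreading these weights over X gives a positive point of the affine hull
   on both hyperplanes, while the splits differ. *)

(* Membership patterns: a cell (b1, b2) records whether an element lies in
   two given sets.  Functions on cells are handled through their four values,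
   so that statements about an arbitrary pattern P only mention the values
   P (b1, b2) and can be decided by computation. *)
Definition cell := (bool * bool)%type.

Definition cell_of (T : Type) (v11 v10 v01 v00 : T) : cell -> T :=
  fun t => match t with
           | (true, true) => v11 | (true, false) => v10
           | (false, true) => v01 | (false, false) => v00
           end.

Definition cell_all (p : pred cell) : bool :=
  [&& p (true, true), p (true, false), p (false, true) & p (false, false)].

Definition cell_any (p : pred cell) : bool :=
  [|| p (true, true), p (true, false), p (false, true) | p (false, false)].

Definition cell_sum (w : cell -> nat) : nat :=
  (w (true, true) + w (true, false) + w (false, true) + w (false, false))%N.

Definition restrict (p : pred cell) (w : cell -> nat) : cell -> nat :=
  fun t => if p t then w t else 0%N.

Lemma cell_allP (p : pred cell) : reflect (forall t, p t) (cell_all p).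
Proof. by apply: (iffP and4P) => [[? ? ? ?] [[] []] //|h]; split; apply: h. Qed.

Lemma cell_anyP (p : pred cell) : reflect (exists t, p t) (cell_any p).
Proof.
apply: (iffP or4P) => [|[[[] []] pt]]; [by case=> pt; eexists; exact: pt | ..];
  by [constructor 1 | constructor 2 | constructor 3 | constructor 4].
Qed.

Lemma sum_cell_natr (R : pzSemiRingType) (p : pred cell) (w : cell -> nat) :
  \sum_(t | p t) ((w t)%:R : R) = (cell_sum (restrict p w))%:R.
Proof.
rewrite big_mkcond /=.
transitivity (\sum_(a : bool) \sum_(b : bool) (if p (a, b) then (w (a, b))%:R else 0 : R)).
  by rewrite pair_big; apply: eq_bigr => -[].
rewrite !big_bool /cell_sum /restrict !natrD.
by case: (p (true, true)); case: (p (true, false)); case: (p (false, true));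
  case: (p (false, false)); rewrite /= ?add0r ?addr0 ?addrA.
Qed.

Definition negc (t : cell) : cell := (~~ t.1, ~~ t.2).

Definition spans (P : pred cell) : bool :=
  [&& cell_any (fun t => P t && t.1), cell_any (fun t => P t && ~~ t.1),
      cell_any (fun t => P t && t.2) & cell_any (fun t => P t && ~~ t.2)].

(* Every pattern occurs in P or its opposite occurs in Q; this is how the
   incompatibility of two directed partial splits reads on patterns. *)
Definition crossing (P Q : pred cell) : bool := cell_all (fun t => P t || Q (negc t)).

Definition balanced (w z : cell -> nat) : bool :=
  [&& cell_sum w == cell_sum z,
      cell_sum (restrict fst w) == cell_sum (restrict fst z)
    & cell_sum (restrict snd w) == cell_sum (restrict snd z)].

(* The weights with values in {1, 2} on the cells, indexed by the four
   binary digits of k < 16. *)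
Definition small_weight (k : nat) : cell -> nat :=
  fun t => (cell_of (odd k) (odd k./2) (odd k./2./2) (odd k./2./2./2) t).+1.

Lemma balanced_search (a b c d a' b' c' d' : bool) :
  let P := cell_of a b c d in let Q := cell_of a' b' c' d' in
  [&& spans P, spans Q & crossing P Q] ==>
  has (fun k => has (fun l => balanced (restrict P (small_weight k))
                                       (restrict Q (small_weight l))) (iota 0 16))
      (iota 0 16).
Proof.
by case: a; case: b; case: c; case: d; case: a'; case: b'; case: c'; case: d'; vm_compute.
Qed.

(* The same statement for arbitrary patterns, which only enter through
   their values on the four cells. *)
Lemma balanced_weights (P Q : pred cell) : spans P -> spans Q -> crossing P Q ->
  exists c d : cell -> nat,
    [/\ forall t, (0 < c t)%N, forall t, (0 < d t)%N & balanced (restrict P c) (restrict Q d)].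
Proof.
move=> hP hQ hPQ; have hyps : [&& spans P, spans Q & crossing P Q] by rewrite hP hQ hPQ.
have /hasP [k _ /hasP [l _ hkl]] := implyP (balanced_search (P (true, true)) (P (true, false))
  (P (false, true)) (P (false, false)) (Q (true, true)) (Q (true, false)) (Q (false, true))
  (Q (false, false))) hyps.
by exists (small_weight k), (small_weight l).
Qed.

Section BirkhoffConfiguration.
Variables (R : realFieldType) (X : finType).
Local Notation pts := (@Bpts R X).
Implicit Types (v : (X + X)%type -> R).

Definition sumL v : R := \sum_x v (inl x).
Definition sumR v : R := \sum_y v (inr y).

Definition join_coords (u w : X -> R) : (X + X)%type -> R :=
  fun d => match d with inl x => u x | inr y => w y end.

Lemma dotE (a v : (X + X)%type -> R) :
  dot a v = \sum_x a (inl x) * v (inl x) + \sum_y a (inr y) * v (inr y).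
Proof. by rewrite /dot big_sumType. Qed.

Lemma sum_delta (z : X) (F : X -> R) : \sum_x (x == z)%:R * F x = F z.
Proof. by rewrite (bigD1 z) //= eqxx mul1r big1 ?addr0 // => x /negbTE ->; rewrite mul0r. Qed.

Lemma sum_delta1 (z : X) : \sum_x ((x == z)%:R : R) = 1.
Proof. by rewrite -[RHS](sum_delta z (fun _ => 1)); apply: eq_bigr => x _; rewrite mulr1. Qed.

Lemma dot_vertex a (p : X * X) : dot a (pts p) = a (inl p.1) + a (inr p.2).
Proof.
rewrite dotE /Bpts; congr (_ + _).
  by rewrite -(sum_delta p.1 (fun x => a (inl x))); apply: eq_bigr => x _; rewrite mulrC.
by rewrite -(sum_delta p.2 (fun y => a (inr y))); apply: eq_bigr => y _; rewrite mulrC.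
Qed.

Lemma sum_pairs (F : X * X -> R) : \sum_k F k = \sum_x \sum_y F (x, y).
Proof. by rewrite pair_big; apply: eq_bigr => -[]. Qed.

Lemma sums_combination (lam : X * X -> R) v :
  (forall d, v d = \sum_k lam k * pts k d) -> sumL v = \sum_k lam k /\ sumR v = \sum_k lam k.
Proof.
move=> hv; rewrite /sumL /sumR (eq_bigr _ (fun x _ => hv (inl x))).
rewrite (eq_bigr _ (fun y _ => hv (inr y))).
by split; rewrite exchange_big /=; apply: eq_bigr => k _;
  rewrite -big_distrr /= sum_delta1 mulr1.
Qed.

Lemma aff_sums v : in_aff pts v -> sumL v = 1 /\ sumR v = 1.
Proof. by case=> lam [h1 /sums_combination]; rewrite h1. Qed.

Lemma conv_sums v : in_conv pts v -> [/\ sumL v = 1, sumR v = 1 & forall d, 0 <= v d].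
Proof.
case=> lam [h0 h1 hv]; have [-> ->] := sums_combination hv; split; rewrite ?h1 // => d.
rewrite hv; apply: sumr_ge0 => k _; apply: mulr_ge0 => //.
by case: d => [x|y]; rewrite /Bpts ler0n.
Qed.

(* Conversely, a nonnegative point with both masses 1 is the convex
   combination with coefficients v(x) v(y') of the vertices e_x + e_y'. *)
Lemma sums_conv v : sumL v = 1 -> sumR v = 1 -> (forall d, 0 <= v d) -> in_conv pts v.
Proof.
move=> hL hR h0; exists (fun k => v (inl k.1) * v (inr k.2)); split.
- by move=> k; apply: mulr_ge0.
- rewrite sum_pairs /= -hL; apply: eq_bigr => x _.
  by rewrite -big_distrr /= -/(sumR v) hR mulr1.
- case=> [x0|y0]; rewrite sum_pairs /Bpts /=.
    transitivity (v (inl x0) * sumR v); first by rewrite hR mulr1.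
    rewrite -(sum_delta x0 (fun x => v (inl x) * sumR v)).
    apply: eq_bigr => x _.
    rewrite /sumR mulrA mulrC big_distrl /=; apply: eq_bigr => y _.
    by rewrite eq_sym; ring.
  transitivity (v (inr y0) * sumL v); first by rewrite hL mulr1.
  rewrite exchange_big /= -(sum_delta y0 (fun y => v (inr y) * sumL v)).
  apply: eq_bigr => y _; rewrite /sumL mulrA mulrC big_distrl /=; apply: eq_bigr => x _.
  by rewrite eq_sym; ring.
Qed.

(* Any point with both masses 1 is an affine combination of vertices: use
   the coefficients v(x)[y = z] + [x = z]v(y') - [x = z][y = z]. *)
Lemma sums_aff (z : X) v : sumL v = 1 -> sumR v = 1 -> in_aff pts v.
Proof.
move=> hL hR.
exists (fun k => v (inl k.1) * (k.2 == z)%:R + (k.1 == z)%:R * v (inr k.2)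
                 - (k.1 == z)%:R * (k.2 == z)%:R); split.
- rewrite sum_pairs /= -[in RHS]hL; apply: eq_bigr => x _ /=.
  by rewrite sumrB big_split /= -!big_distrr /= sum_delta1 -/(sumR v) hR !mulr1 addrK.
- case=> [x1|y1]; rewrite sum_pairs /Bpts /=.
  + rewrite -(sum_delta x1 (fun x => v (inl x))); apply: eq_bigr => x _ /=.
    rewrite -big_distrl /= sumrB big_split /= -!big_distrr /= sum_delta1 -/(sumR v) hR.
    by rewrite !mulr1 addrK mulrC eq_sym.
  + rewrite exchange_big /= -(sum_delta y1 (fun y => v (inr y))); apply: eq_bigr => y _ /=.
    rewrite -big_distrl /= sumrB big_split /= -!big_distrl /= sum_delta1 -/(sumL v) hL.
    by rewrite !mul1r [_ + v _]addrC addrK mulrC eq_sym.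
Qed.

Lemma vertex_aff (p : X * X) : in_aff pts (pts p).
Proof.
by apply: (sums_aff p.1); rewrite /sumL /sumR /Bpts sum_delta1.
Qed.

Definition delta (e : X + X) : (X + X)%type -> R := fun d => (d == e)%:R.

Definition on_left (e : X + X) : bool := if e is inl _ then true else false.

Lemma sums_delta e : sumL (delta e) = (on_left e)%:R /\ sumR (delta e) = (~~ on_left e)%:R.
Proof.
rewrite /sumL /sumR /delta.
have hl (z : X) : \sum_x ((inl x == inl z :> X + X)%:R : R) = 1.
  by rewrite -[RHS](sum_delta1 z); apply: eq_bigr => x _; rewrite (inj_eq (@inl_inj _ _)).
have hr (z : X) : \sum_x ((inr x == inr z :> X + X)%:R : R) = 1.
  by rewrite -[RHS](sum_delta1 z); apply: eq_bigr => x _; rewrite (inj_eq (@inr_inj _ _)).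
by case: e => z; rewrite /= ?hl ?hr big1.
Qed.

(* When #|X| >= 2, every coordinate has a distinct partner on the same side:
   moving mass between the two keeps a point in the affine hull. *)
Lemma partner_same_side (hX : (1 < #|X|)%N) (d : X + X) :
  exists e, e != d /\ on_left e = on_left d.
Proof.
have [z0 [z1 [_ _ hz]]] := card_gt1P hX.
have other (z : X) : exists z', z' != z.
  by case: (eqVneq z0 z) => [<-|hz0]; [exists z1; rewrite eq_sym | exists z0].
by case: d => z; have [z' hz'] := other z; [exists (inl z') | exists (inr z')];
  split => //; apply: contra hz' => /eqP [->].
Qed.

(* A point of the relative interior has all coordinates positive (this uses
   #|X| >= 2: with a single element the configuration is one point). *)
Lemma relint_pos (hX : (1 < #|X|)%N) v : in_relint pts v ->
  [/\ sumL v = 1, sumR v = 1 & forall d, 0 < v d].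
Proof.
move=> [hc [eps [heps hnear]]]; have [hL hR h0] := conv_sums hc; split => // d.
rewrite lt_def h0 andbT; apply/negP => /eqP hd.
have [e [hed hside]] := partner_same_side hX d.
pose u := fun d' => v d' + eps / 2 * (delta e d' - delta d d').
have [[eL eR] [dL dR]] := (sums_delta e, sums_delta d).
have uL : sumL u = 1.
  rewrite /sumL big_split /= -big_distrr sumrB /= -/(sumL v) -/(sumL (delta e)).
  by rewrite -/(sumL (delta d)) eL dL hside subrr mulr0 addr0.
have uR : sumR u = 1.
  rewrite /sumR big_split /= -big_distrr sumrB /= -/(sumR v) -/(sumR (delta e)).
  by rewrite -/(sumR (delta d)) eR dR hside subrr mulr0 addr0.
have u_aff : in_aff pts u by apply: (sums_aff (match d with inl z | inr z => z end)).
have u_near d' : `|u d' - v d'| < eps.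
  rewrite /u addrC addKr normrM gtr0_norm ?divr_gt0 // /delta.
  have heps2 : eps / 2 < eps by rewrite ltr_pdivrMr // ltr_pMr // ltr1n.
  by case: (d' == e); case: (d' == d); rewrite /= ?subrr ?subr0 ?sub0r ?normrN ?normr0 ?normr1
    ?mulr0 ?mulr1.
have [_ _ /(_ d)] := conv_sums (hnear u u_aff u_near).
rewrite /u /delta eqxx eq_sym (negbTE hed) hd /= add0r sub0r mulrN mulr1 oppr_ge0 => hle.
by have := divr_gt0 heps (ltr0Sn _ 1); rewrite ltNge hle.
Qed.

(* Conversely, positive points of the affine hull are in the relative interior:
   a neighbourhood of radius min_d v d stays nonnegative. *)
Lemma pos_relint (z : X) v : sumL v = 1 -> sumR v = 1 -> (forall d, 0 < v d) ->
  in_relint pts v.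
Proof.
move=> hL hR hpos; split; first by apply: sums_conv => // d; apply: ltW.
case: (@arg_minP _ _ _ (inl z) xpredT v isT) => m _ hm.
exists (v m); split => // u /aff_sums [uL uR] hnear; apply: sums_conv => // d.
have := hnear d; rewrite ltr_norml => /andP [+ _].
rewrite ltrBrDl ltrBlDr => hlt.
by rewrite -(lerD2r (v m)) add0r; apply: ltW; exact: le_lt_trans (hm d isT) hlt.
Qed.

(* Two vertices e_x + e_y' and e_u + e_v' spanning an edge of conv B(X) share
   a coordinate: otherwise e_x + e_v' also maximises the edge functional but
   is not on the segment between them. *)
Lemma edge_shares_coordinate (k l : X * X) : is_edge pts k l -> k.1 = l.1 \/ k.2 = l.2.
Proof.
case: k l => [x y] [x' y'] [_ [w [wmax wkl wseg]]] /=.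
case: (eqVneq x x') => [|hx]; [by left | right]; apply/eqP; apply: contraT => hy.
have [hm1 hm2] := (wmax (x, y'), wmax (x', y)); move: hm1 hm2 wkl.
rewrite !dot_vertex /= => hm1 hm2 wkl.
have [t [_ _ ht]] := wseg (x, y') (ltac:(rewrite !dot_vertex /=; lra)).
have := ht (inl x); have := ht (inr y'); rewrite /Bpts /= !eqxx (negbTE hx) eq_sym (negbTE hy) /=.
lra.
Qed.

Lemma dot_T (S : {set X} * {set X}) v :
  dot (Tnormal R S) v = \sum_(x in S.1) v (inl x) - \sum_(y in S.2) v (inr y).
Proof.
rewrite dotE /Tnormal !(big_mkcond (fun x => x \in _)) -sumrN; congr (_ + _);
  apply: eq_bigr => x _; case: (x \in _);
  by rewrite /= ?mulr1n ?mulr0n ?oppr0 ?mul1r ?mul0r ?mulN1r.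
Qed.

Lemma dot_T_vertex (S : {set X} * {set X}) (p : X * X) :
  dot (Tnormal R S) (pts p) = (p.1 \in S.1)%:R - (p.2 \in S.2)%:R.
Proof. by rewrite dot_vertex. Qed.

(* Spreading weights lam : T -> R evenly over the fibres of tau : X -> T gives
   a positive function on X whose sums over tau-preimages are the lam-sums;
   lam must be positive on the image of tau and vanish off it. *)
Lemma realize_weights (T : finType) (tau : X -> T) (lam : T -> R) :
  (forall x, 0 < lam (tau x)) -> (forall t, lam t != 0 -> exists x, tau x = t) ->
  exists u : X -> R, (forall x, 0 < u x) /\
    forall p : pred T, \sum_(x | p (tau x)) u x = \sum_(t | p t) lam t.
Proof.
move=> lam_pos lam_supp.
pose fibre t := #|[pred x | tau x == t]|.
have fibre_tau x : (0 < fibre (tau x))%N by apply/card_gt0P; exists x; rewrite inE.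
exists (fun x => lam (tau x) / (fibre (tau x))%:R); split.
  by move=> x; apply: divr_gt0; rewrite ?ltr0n.
move=> p; rewrite (partition_big tau p) //=; apply: eq_bigr => t pt.
rewrite (eq_bigr (fun _ => lam t / (fibre t)%:R)) => [|x /andP [_ /eqP -> //]].
rewrite sumr_const (eq_card (B := [pred x | tau x == t])) => [|x]; last first.
  by rewrite unfold_in /= inE; case: eqVneq => [->|]; rewrite ?pt ?andbF.
rewrite -/(fibre t).
case: (posnP (fibre t)) => [fibre0|fibre_pos].
  rewrite fibre0 mulr0n; apply/esym/eqP; apply: contraT => /lam_supp [x hx].
  by move: (fibre_tau x); rewrite hx fibre0.
by rewrite -[LHS]mulr_natr divfK // pnatr_eq0 -lt0n.
Qed.

Lemma halving_weights (A : {set X}) (a b : X) : a \in A -> b \notin A ->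
  exists u : X -> R, [/\ forall x, 0 < u x, \sum_x u x = 1 & \sum_(x in A) u x = 1 / 2].
Proof.
move=> aA bA.
have [|t|u [u_pos u_sums]] := @realize_weights _ (fun x => x \in A) (fun _ => 1 / 2).
- by move=> x; rewrite divr_gt0.
- by move=> _; case: t; [exists a | exists b; apply/negbTE].
exists u; split => //; first by rewrite (u_sums predT) big_bool /= -splitr.
transitivity (\sum_(t : bool | t) (1 / 2 : R)); first exact: (u_sums idfun).
by rewrite big_mkcond big_bool /= addr0.
Qed.

Lemma T_is_split (S : {set X} * {set X}) : dps S -> is_split pts (Tnormal R S) 0.
Proof.
case: S => A B [/= /set0Pn [a aA] /set0Pn [b bB] AB].
have aB : a \notin B by rewrite (disjointFr AB aA).
have bA : b \notin A by rewrite (disjointFl AB bB).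
split.
- by exists (a, a); rewrite dot_T_vertex /= aA (negbTE aB) subr0 oner_eq0.
- have [u [u_pos u_sum uA]] := halving_weights aA bA.
  have [w [w_pos w_sum wB]] := halving_weights bB aB.
  exists (join_coords u w); split; last by rewrite dot_T /= uA wB subrr.
  by apply: (pos_relint a) => // -[x|y] /=.
- move=> k l /edge_shares_coordinate shared; rewrite !dot_T_vertex /=.
  by case: shared => ->; case: (l.1 \in A); case: (k.2 \in B); case: (l.2 \in B);
    case: (k.1 \in A); rewrite /=; lra.
Qed.

Lemma pos_sum_eq0 (F : X -> R) (E : {set X}) :
  (forall x, 0 < F x) -> \sum_(x in E) F x = 0 -> E = set0.
Proof.
move=> F_pos /psumr_eq0P sum0; apply/setP => x; rewrite inE; apply/negP => xE.
by move: (F_pos x); rewrite sum0 ?ltxx // => y _; apply: ltW.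
Qed.

Lemma nested_common_point (A B C D : {set X}) v : (forall d, 0 < v d) ->
  A \subset C -> D \subset B ->
  dot (Tnormal R (A, B)) v = 0 -> dot (Tnormal R (C, D)) v = 0 -> A = C /\ B = D.
Proof.
move=> v_pos AC DB; rewrite !dot_T /=.
rewrite (@big_setID _ _ _ _ C A) (@big_setID _ _ _ _ B D) /= (setIidPr AC) (setIidPr DB).
move=> eAB eCD.
have CA_pos : 0 <= \sum_(x in C :\: A) v (inl x) by apply: sumr_ge0 => x _; apply: ltW.
have BD_pos : 0 <= \sum_(y in B :\: D) v (inr y) by apply: sumr_ge0 => y _; apply: ltW.
have /eqP : C :\: A = set0 by apply: (pos_sum_eq0 (fun x => v_pos (inl x))); lra.
have /eqP : B :\: D = set0 by apply: (pos_sum_eq0 (fun y => v_pos (inr y))); lra.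
by rewrite !setD_eq0 => BD CA; split; apply/eqP; rewrite eqEsubset ?AC ?CA ?BD ?DB.
Qed.

Lemma conv_aff v : in_conv pts v -> in_aff pts v.
Proof. by case=> lam [_ lam1 hv]; exists lam. Qed.

Lemma complement_same_split (C D : {set X}) :
  same_split pts (Tnormal R (~: C, ~: D)) 0 (Tnormal R (C, D)) 0.
Proof.
move=> v /aff_sums [vL vR]; rewrite !dot_T /=.
have compl (F : X -> R) E : \sum_(x in ~: E) F x = \sum_x F x - \sum_(x in E) F x.
  by rewrite [in RHS](bigID (mem E)) /= addrC addrK; apply: eq_bigl => x; rewrite inE.
rewrite !compl -/(sumL v) -/(sumR v) vL vR; lra.
Qed.

Lemma compatible_common_point (hX : (1 < #|X|)%N) (S T : {set X} * {set X}) :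
  dps_compat S T -> forall v, in_relint pts v ->
  dot (Tnormal R S) v = 0 -> dot (Tnormal R T) v = 0 ->
  same_split pts (Tnormal R S) 0 (Tnormal R T) 0.
Proof.
case: S T => [A B] [C D] compat v v_relint eS eT.
have [_ _ v_pos] := relint_pos hX v_relint.
have eTc : dot (Tnormal R (~: C, ~: D)) v = 0.
  exact: (@complement_same_split C D v (conv_aff v_relint.1)).2.
case: compat => /andP [sub1 sub2].
- by have [-> ->] := nested_common_point v_pos sub1 sub2 eS eT.
- by have [-> ->] := nested_common_point v_pos sub1 sub2 eS eTc; apply: complement_same_split.
- by have [-> ->] := nested_common_point v_pos sub1 sub2 eT eS.
- have [eC eD] := nested_common_point v_pos sub1 sub2 eTc eS.
  by rewrite -eC -eD; apply: complement_same_split.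
Qed.

Lemma vertex_on_T (S : {set X} * {set X}) (p : X * X) :
  dot (Tnormal R S) (pts p) = 0 <-> (p.1 \in S.1) == (p.2 \in S.2).
Proof.
rewrite dot_T_vertex; case: (p.1 \in S.1); case: (p.2 \in S.2); rewrite /= ?subrr //;
  by split => // /eqP; rewrite ?subr0 ?sub0r ?oppr_eq0 oner_eq0.
Qed.

(* Two splits T_S, T_T that coincide are equal up to complementing both sides
   of T, hence S and T are compatible. *)
Lemma same_split_compatible (z : X) (S T : {set X} * {set X}) :
  same_split pts (Tnormal R S) 0 (Tnormal R T) 0 -> dps_compat S T.
Proof.
case: S T => [A B] [C D] same.
have vertex x y : ((x \in A) == (y \in B)) = ((x \in C) == (y \in D)).
  apply/idP/idP => /(vertex_on_T (_, _) (x, y)) /(same _ (vertex_aff (x, y))) /vertex_on_T //.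
pose k := (z \in A) == (z \in C).
have eA x : (x \in A) = (k == (x \in C)).
  move: (vertex x z) (vertex z z); rewrite /k.
  by case: (x \in A); case: (x \in C); case: (z \in A); case: (z \in B); case: (z \in C);
    case: (z \in D).
have eB y : (y \in B) = (k == (y \in D)).
  move: (vertex z y); rewrite /k.
  by case: (y \in B); case: (y \in D); case: (z \in A); case: (z \in C).
case: k eA eB => eA eB; [apply: Or41 | apply: Or42]; apply/andP; split; apply/subsetP => x;
  by rewrite ?inE ?eA ?eB.
Qed.

Definition pattern (E F : {set X}) : pred cell :=
  fun t => [exists x, ((x \in E), (x \in F)) == t].

Lemma pattern_mem (E F : {set X}) x : pattern E F ((x \in E), (x \in F)).
Proof. by apply/existsP; exists x. Qed.

Lemma pattern_spans (E F : {set X}) (a b c d : X) :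
  a \in E -> b \notin E -> c \in F -> d \notin F -> spans (pattern E F).
Proof.
move=> aE bE cF dF; apply/and4P; split; apply/cell_anyP;
  [exists (a \in E, a \in F) | exists (b \in E, b \in F)
  | exists (c \in E, c \in F) | exists (d \in E, d \in F)];
  by rewrite pattern_mem /= ?aE ?bE ?cF ?dF.
Qed.

(* Each way for (A,B) and (C,D) to be compatible is the absence of a pattern
   t for (A,C) together with the absence of the opposite pattern for (B,D). *)
Lemma incompatible_crossing (A B C D : {set X}) :
  ~ dps_compat (A, B) (C, D) -> crossing (pattern A C) (pattern B D).
Proof.
move=> incompat; apply/cell_allP => t; apply/negPn/negP; rewrite negb_or.
move=> /andP [/existsPn noP /existsPn noQ]; apply: incompat.
case: t noP noQ => [[] []] noP noQ /=; [apply: Or42 | apply: Or41 | apply: Or43 | apply: Or44];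
  apply/andP; split; apply/subsetP => x; rewrite ?inE; move: (noP x) (noQ x);
  by case: (x \in A); case: (x \in B); case: (x \in C); case: (x \in D).
Qed.

Lemma pattern_distribution (z : X) (E F : {set X}) (c : cell -> nat) :
  (forall t, (0 < c t)%N) ->
  let w := restrict (pattern E F) c in
  exists u : X -> R, [/\ forall x, 0 < u x, \sum_x u x = 1,
    \sum_(x in E) u x = (cell_sum (restrict fst w))%:R / (cell_sum w)%:R &
    \sum_(x in F) u x = (cell_sum (restrict snd w))%:R / (cell_sum w)%:R].
Proof.
move=> c_pos w; pose tau x := ((x \in E), (x \in F)).
have w_tau x : w (tau x) = c (tau x) by rewrite /w /restrict pattern_mem.
have N_pos : (0 < cell_sum w)%N.
  have := w_tau z; rewrite /cell_sum; case: (tau z) => [[] []] ->;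
  by rewrite ?addn_gt0 c_pos ?orbT.
have [|t|u [u_pos u_sums]] := @realize_weights _ tau (fun t => (w t)%:R / (cell_sum w)%:R).
- by move=> x; rewrite w_tau divr_gt0 ?ltr0n.
- rewrite mulf_eq0 negb_or pnatr_eq0 /w /restrict => /andP [].
  by case: ifP => // /existsP [x /eqP <-]; exists x.
have sum_restrict (p : pred cell) : \sum_(x | p (tau x)) u x
    = (cell_sum (restrict p w))%:R / (cell_sum w)%:R.
  by rewrite u_sums -mulr_suml sum_cell_natr.
exists u; split => //; [|exact: (sum_restrict fst) | exact: (sum_restrict snd)].
by rewrite (sum_restrict predT) divff // pnatr_eq0 -lt0n.
Qed.

Lemma incompatible_common_point (z : X) (S T : {set X} * {set X}) :
  dps S -> dps T -> ~ dps_compat S T ->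
  exists v, [/\ in_relint pts v, dot (Tnormal R S) v = 0 & dot (Tnormal R T) v = 0].
Proof.
case: S T => [A B] [C D] [/= /set0Pn [a aA] /set0Pn [b bB] AB].
case=> [/= /set0Pn [c cC] /set0Pn [d dD] CD] incompat.
have aB : a \notin B by rewrite (disjointFr AB aA).
have bA : b \notin A by rewrite (disjointFl AB bB).
have cD : c \notin D by rewrite (disjointFr CD cC).
have dC : d \notin C by rewrite (disjointFl CD dD).
have [wAC [wBD [wAC_pos wBD_pos]]] := balanced_weights (pattern_spans aA bA cC dC)
  (pattern_spans bB aB dD cD) (incompatible_crossing incompat).
case/and3P => /eqP eN /eqP e1 /eqP e2.
have [u [u_pos u1 uA uC]] := pattern_distribution z A C wAC_pos.
have [w [w_pos w1 wB wD]] := pattern_distribution z B D wBD_pos.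
exists (join_coords u w); split.
- by apply: (pos_relint z) => // -[x|y] /=.
- by rewrite dot_T /= uA wB eN e1 subrr.
- by rewrite dot_T /= uC wD eN e2 subrr.
Qed.

Lemma compatible_system_of_compatible (hX : (1 < #|X|)%N) (SS : {set {set X} * {set X}}) :
  (forall S, S \in SS -> dps S) -> dps_set_compatible SS ->
  compatible_split_system (fun S => S \in SS) pts (@Tnormal R X) (fun _ => 0).
Proof.
move=> hSS compat; split=> [S /hSS /T_is_split //|S T hS hT not_same v v_relint eS eT].
exact: not_same (compatible_common_point hX (compat S T hS hT) v_relint eS eT).
Qed.

Lemma compatible_of_compatible_system (hX : (1 < #|X|)%N) (SS : {set {set X} * {set X}}) :
  (forall S, S \in SS -> dps S) ->
  compatible_split_system (fun S => S \in SS) pts (@Tnormal R X) (fun _ => 0) ->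
  dps_set_compatible SS.
Proof.
move=> hSS [_ meet] S T hS hT; have [z _] := card_gt0P (ltnW hX).
case: S T hS hT => [A B] [C D] hS hT; apply/or4P; apply: contraT => not_compat.
have incompat : ~ dps_compat (A, B) (C, D) by move/or4P; apply/negP.
have [v [v_relint eS eT]] := incompatible_common_point z (hSS _ hS) (hSS _ hT) incompat.
by case: (meet _ _ hS hT (fun same => incompat (same_split_compatible z same)) v v_relint eS eT).
Qed.

End BirkhoffConfiguration.

Unset Implicit Arguments.
Set Strict Implicit.

Theorem mainTheorem5 (R : realFieldType) (X : finType) (hX : (2 <= #|X|)%N)
  (SS : {set {set X} * {set X}}) (hSS : forall S, S \in SS -> dps S) :
  dps_set_compatible SS <->
  compatible_split_system (fun S => S \in SS) (@Bpts R X)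
    (@Tnormal R X) (fun _ => 0).
Proof.
split; [exact: compatible_system_of_compatible | exact: compatible_of_compatible_system].
Qed.
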